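(* Let $\Psi$ be proper closed convex, $F=\frac1n\sum_{i=1}^nF_i$ with $F_i(x)=\mathbb{E}_{\xi_i\sim\mathcal{D}_i}[F_{\xi_i}(x)]$, and $x^*$ a solution of $\langle F(x^* ),x-x^*\rangle+\Psi(x)-\Psi(x^* )\ge0$ for all $x$. Let $K\ge0$, $\beta\in(0,1]$, $0<\gamma\le\frac{1}{\sqrt{12}L}$, $V\ge\|x^0-x^*\|^2+\frac{409600\gamma^2\ln^2\frac{48n(K+1)}{\beta}}{n^2}\sum_{i=1}^n\|F_i(x^* )\|^2$, $Q=B_{4n\sqrt V}(x^* )$, and assume $\|F_i(x)-F_i(y)\|\le L\|x-y\|$ for all $x,y\in Q$, $i\in[n]$, and $F$ is monotone on $Q$. Consider DProx-clipped-SEG-shift (arbitrary initial shifts, $\nu$, $\lambda_k$). If $x^k,\tilde x^k\in Q$ for all $k=0,1,\dots,K$, then for all $u\in B_{4n\sqrt V}(x^* )$ $$\langle F(u),\tilde x^K_{\mathrm{avg}}-u\rangle+\Psi(\tilde x^K_{\mathrm{avg}})-\Psi(u)\le\frac{\|x^0-u\|^2-\|x^{K+1}-u\|^2}{2\gamma(K+1)}+\frac{\gamma}{K+1}\sum_{k=0}^K\left(3\|\omega_k\|^2+4\|\theta_k\|^2\right)+\frac1{K+1}\sum_{k=0}^K\langle\theta_k,x^k-u\rangle,$$ where $\tilde x^K_{\mathrm{avg}}=\frac1{K+1}\sum_{k=0}^K\tilde x^k$, $\theta_k=F(\tilde x^k)-\hat g^k$ and $\omega_k=F(x^k)-\tilde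 g^k$.
   Context: $\mathrm{prox}$ and $\mathrm{clip}(y,\lambda)=\min\{1,\lambda/\|y\|\}y$ ($\mathrm{clip}(0,\lambda)=0$) as usual. DProx-clipped-SEG-shift: $\tilde x^k=\mathrm{prox}_{\gamma\Psi}(x^k-\gamma\tilde g^k)$, $\tilde g^k=\frac1n\sum_i\tilde g_i^k$, $\tilde g_i^k=\tilde h_i^k+\tilde\Delta_i^k$, $\tilde h_i^{k+1}=\tilde h_i^k+\nu\tilde\Delta_i^k$, $\tilde\Delta_i^k=\mathrm{clip}(F_{\xi^k_{1,i}}(x^k)-\tilde h_i^k,\lambda_k)$; $x^{k+1}=\mathrm{prox}_{\gamma\Psi}(x^k-\gamma\hat g^k)$, $\hat g^k=\frac1n\sum_i\hat g_i^k$, $\hat g_i^k=\hat h_i^k+\hat\Delta_i^k$, $\hat h_i^{k+1}=\hat h_i^k+\nu\hat\Delta_i^k$, $\hat\Delta_i^k=\mathrm{clip}(F_{\xi^k_{2,i}}(\tilde x^k)-\hat h_i^k,\lambda_k)$, with all samples drawn independently. *)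

From HB Require Import structures.
From mathcomp Require Import all_boot all_order all_algebra.
From mathcomp Require Import all_classical all_reals all_analysis.
Set Implicit Arguments. Unset Strict Implicit. Unset Printing Implicit Defensive.
Import Order.TTheory GRing.Theory Num.Theory.
Local Open Scope ring_scope.

Section Defs.
Variables (R : realType) (d : nat).
Notation vec := 'rV[R]_d.

Definition sdot (u v : vec) : R := \sum_(j < d) u 0 j * v 0 j.
Definition snorm (u : vec) : R := Num.sqrt (sdot u u).

Definition sball (c : vec) (r : R) (x : vec) : Prop := snorm (x - c) <= r.

Definition clip (y : vec) (lam : R) : vec :=
  if y == 0 then 0 else Num.min 1 (lam / snorm y) *: y.

Definition proper_fun (Psi : vec -> \bar R) : Prop :=
  (forall x, Psi x != -oo%E) /\ exists x, Psi x \is a fin_num.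
Definition convex_fun (Psi : vec -> \bar R) : Prop :=
  forall (x y : vec) (t : R), 0 < t < 1 ->
    (Psi (t *: x + (1 - t) *: y)%R <= t%:E * Psi x + (1 - t)%:E * Psi y)%E.
Definition closed_fun (Psi : vec -> \bar R) : Prop :=
  forall (a : R) (y : nat -> vec) (z : vec),
    (forall m, (Psi (y m) <= a%:E)%E) ->
    (forall e : R, 0 < e -> exists N : nat, forall m, (N <= m)%N -> snorm (y m - z) < e) ->
    (Psi z <= a%:E)%E.

(* p = prox_{gamma Psi}(z): p minimizes gamma Psi(.) + 1/2 ||. - z||^2
   (the minimizer is unique for proper closed convex Psi). *)
Definition is_prox (gamma : R) (Psi : vec -> \bar R) (z p : vec) : Prop :=
  forall y : vec,
    (gamma%:E * Psi p + (2^-1 * snorm (p - z) ^+ 2)%:E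
     <= gamma%:E * Psi y + (2^-1 * snorm (y - z) ^+ 2)%:E)%E.

Definition avgop (n : nat) (Fi : 'I_n -> vec -> vec) (x : vec) : vec :=
  n%:R^-1 *: \sum_(i < n) Fi i x.

Definition shiftDelta (n : nat) (Fs : 'I_n -> vec) (h : 'I_n -> vec) (lam : R)
  (i : 'I_n) : vec := clip (Fs i - h i) lam.
Definition shiftG (n : nat) (Fs : 'I_n -> vec) (h : 'I_n -> vec) (lam : R) : vec :=
  n%:R^-1 *: \sum_(i < n) (h i + shiftDelta Fs h lam i).

End Defs.

(* DProx-clipped-SEG-shift trajectory, for given samples.
   Fxi i xi x = F_{xi}(x) for the i-th worker; xi1 k i, xi2 k i are the samples
   xi^k_{1,i}, xi^k_{2,i}. *)
Definition is_DProx_clipped_SEG_shift (R : realType) (d n : nat) (Xi : Type)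
  (Fxi : 'I_n -> Xi -> 'rV[R]_d -> 'rV[R]_d) (Psi : 'rV[R]_d -> \bar R)
  (gamma nu : R) (lam : nat -> R) (xi1 xi2 : nat -> 'I_n -> Xi)
  (x xt : nat -> 'rV[R]_d) (ht hh : nat -> 'I_n -> 'rV[R]_d) : Prop :=
  forall k : nat,
    [/\ is_prox gamma Psi (x k - gamma *: shiftG (fun i => Fxi i (xi1 k i) (x k)) (ht k) (lam k)) (xt k),
        forall i, ht k.+1 i = ht k i + nu *: shiftDelta (fun i => Fxi i (xi1 k i) (x k)) (ht k) (lam k) i,
        is_prox gamma Psi (x k - gamma *: shiftG (fun i => Fxi i (xi2 k i) (xt k)) (hh k) (lam k)) (x k.+1)
      & forall i, hh k.+1 i = hh k i + nu *: shiftDelta (fun i => Fxi i (xi2 k i) (xt k)) (hh k) (lam k) i].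

From HB Require Import structures.
From mathcomp Require Import all_boot all_order all_algebra.
From mathcomp Require Import all_classical all_reals all_analysis.
From mathcomp Require Import ring lra.
Import Order.TTheory GRing.Theory Num.Theory.
Local Open Scope ring_scope.

Set Implicit Arguments. Unset Strict Implicit. Unset Printing Implicit Defensive.

(* The optimality conditions of the two prox steps,
     gamma Psi(x~_k) <= gamma Psi(x_{k+1}) + <x~_k - x_k + gamma g~_k, x_{k+1} - x~_k>,
     gamma Psi(x_{k+1}) <= gamma Psi(u) + <x_{k+1} - x_k + gamma g^_k, u - x_{k+1}>,
   and the monotonicity of F between x~_k and u reduce the one-step bound to
   an inequality between quadratic forms.  That inequality holds up to the
   error (3/2) gamma^2 |F(x~_k) - F(x_k)|^2 - (1/8) |x~_k - x_k|^2, which is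
   nonpositive because F is L-Lipschitz on Q and gamma <= 1 / (sqrt 12 L).
   Averaging over k telescopes |x_k - u|^2, and the convexity of Psi bounds
   Psi at the averaged point.  The description of F_i as expectations, the
   variational inequality for x^*, and the constraints on V, beta, nu and
   lambda_k are not needed for this deterministic bound. *)

Lemma le_of_le_add_vanishing (R : realFieldType) (a b c : R) :
  (forall t, 0 < t < 1 -> a <= b + t * c) -> a <= b.
Proof.
move=> H; apply/ler_addgt0Pr => e e0.
have pos : 0 < e + `|c| + 1 by rewrite -addrA ltr_wpDr // addr_ge0.
pose t := e / (e + `|c| + 1).
have t0 : 0 < t by rewrite divr_gt0.
have ct := normr_ge0 c.
have t1 : t < 1 by rewrite ltr_pdivrMr // mul1r; lra.
have te : t * (e + `|c| + 1) = e by rewrite /t mulfVK // gt_eqF.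
have tc : t * c <= t * `|c| by apply: ler_wpM2l; [exact: ltW | exact: ler_norm].
have := H t; rewrite t0 t1 => /(_ isT).
by have := mulr_ge0 (ltW t0) (ltW e0); lra.
Qed.

(* A sum-of-squares certificate; the last bracket is the error term that the
   Lipschitz property and [gamma <= 1 / (sqrt 12 L)] make nonpositive. *)
Lemma extragradient_scalar_le (R : realFieldType) (x xt x1 u fx fxt gx gxt g : R) :
  g * (fxt * (xt - u)) + (xt - (x - g * gx)) * (x1 - xt) + (x1 - (x - g * gxt)) * (u - x1)
  <= 2^-1 * ((x - u) * (x - u) - (x1 - u) * (x1 - u))
     + g ^+ 2 * (3 * ((fx - gx) * (fx - gx)) + 4 * ((fxt - gxt) * (fxt - gxt)))
     + g * ((fxt - gxt) * (x - u))
     + (3 / 2 * g ^+ 2 * ((fxt - fx) * (fxt - fx)) - 8^-1 * ((xt - x) * (xt - x))).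
Proof.
have := sqr_ge0 (3 * g * (fxt - fx) - (xt - x1)).
have := sqr_ge0 (3 * g * (fx - gx) - (xt - x1)).
have := sqr_ge0 (3 * g * (fxt - gxt) + (xt - x1)).
have := sqr_ge0 (4 * g * (fxt - gxt) - 3 * (xt - x)).
have := mulr_ge0 (sqr_ge0 g) (sqr_ge0 (fx - gx)).
have := mulr_ge0 (sqr_ge0 g) (sqr_ge0 (fxt - gxt)).
lra.
Qed.

Lemma avg_telescope_le (R : realFieldType) (a W T S P : nat -> R) (r g : R) K :
  0 < g ->
  (forall k, (k <= K)%N -> S k + P k - r <= (a k - a k.+1) / (2 * g) + g * W k + T k) ->
  K.+1%:R^-1 * \sum_(k < K.+1) S k + K.+1%:R^-1 * \sum_(k < K.+1) P k - r <=
  (a 0%N - a K.+1) / (2 * g * K.+1%:R) + g / K.+1%:R * \sum_(k < K.+1) W k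
  + K.+1%:R^-1 * \sum_(k < K.+1) T k.
Proof.
move=> g_gt0 step.
have K_pos : (0 : R) < K.+1%:R by rewrite ltr0n.
have tele : \sum_(k < K.+1) (a k - a k.+1) = a 0%N - a K.+1.
  rewrite -[RHS]opprB -(telescope_sumr _ (leq0n K.+1)) big_mkord -sumrN.
  by apply: eq_bigr => k _; rewrite opprB.
have : \sum_(k < K.+1) (S k + P k - r)
       <= \sum_(k < K.+1) ((a k - a k.+1) / (2 * g) + g * W k + T k).
  by apply: ler_sum => k _; apply: step; rewrite -ltnS.
rewrite !big_split /= -mulr_suml tele -mulr_sumr sumrN sumr_const card_ord -[r *+ _]mulr_natl.
rewrite -(@ler_pM2l _ K.+1%:R^-1) ?invr_gt0 //.
set SS := \sum_(k < K.+1) S k; set SP := \sum_(k < K.+1) P k.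
set SW := \sum_(k < K.+1) W k; set ST := \sum_(k < K.+1) T k.
have -> : K.+1%:R^-1 * (SS + SP - K.+1%:R * r) = K.+1%:R^-1 * SS + K.+1%:R^-1 * SP - r.
  by field; rewrite gt_eqF.
have -> : K.+1%:R^-1 * ((a 0%N - a K.+1) / (2 * g) + g * SW + ST) =
    (a 0%N - a K.+1) / (2 * g * K.+1%:R) + g / K.+1%:R * SW + K.+1%:R^-1 * ST.
  by field; rewrite !gt_eqF.
done.
Qed.

Lemma sqrMr_le_inv_sqrt (R : rcfType) (g L c : R) :
  0 < g -> 0 < L -> 0 < c -> g <= (Num.sqrt c * L)^-1 -> g ^+ 2 * L ^+ 2 <= c^-1.
Proof.
move=> g_gt0 L_gt0 c_gt0 g_le.
have sc : 0 < Num.sqrt c by rewrite sqrtr_gt0.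
have : (g * (Num.sqrt c * L)) ^+ 2 <= 1.
  apply: exprn_ile1; first by rewrite mulr_ge0 ?ltW ?mulr_gt0.
  by rewrite -ler_pdivlMr ?mulr_gt0 // div1r.
rewrite !exprMn (sqr_sqrtr (ltW c_gt0)) => h.
by rewrite -[c^-1]mul1r ler_pdivlMr //; lra.
Qed.

Section InnerProduct.
Variables (R : realType) (d : nat).
Notation vec := 'rV[R]_d.
Implicit Types (a b c : vec).

Lemma sdotC a b : sdot a b = sdot b a.
Proof. by apply: eq_bigr => j _; rewrite mulrC. Qed.

Lemma sdotDl a b c : sdot (a + b) c = sdot a c + sdot b c.
Proof. by rewrite /sdot -big_split; apply: eq_bigr => j _; rewrite mxE mulrDl. Qed.

Lemma sdotDr a b c : sdot a (b + c) = sdot a b + sdot a c.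
Proof. by rewrite sdotC sdotDl !(sdotC a). Qed.

Lemma sdotZl t a b : sdot (t *: a) b = t * sdot a b.
Proof. by rewrite /sdot mulr_sumr; apply: eq_bigr => j _; rewrite mxE mulrA. Qed.

Lemma sdotZr t a b : sdot a (t *: b) = t * sdot a b.
Proof. by rewrite sdotC sdotZl sdotC. Qed.

Lemma sdotBl a b c : sdot (a - b) c = sdot a c - sdot b c.
Proof. by rewrite sdotDl -scaleN1r sdotZl mulN1r. Qed.

Lemma sdotBr a b c : sdot a (b - c) = sdot a b - sdot a c.
Proof. by rewrite sdotC sdotBl !(sdotC a). Qed.

Lemma sdot0r a : sdot a 0 = 0.
Proof. by rewrite /sdot big1 // => j _; rewrite mxE mulr0. Qed.

Lemma sdot_sumr (I : finType) (f : I -> vec) a :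
  sdot a (\sum_i f i) = \sum_i sdot a (f i).
Proof. exact: (big_morph (sdot a) (sdotDr a) (sdot0r a)). Qed.

Lemma sdot_suml (I : finType) (f : I -> vec) a :
  sdot (\sum_i f i) a = \sum_i sdot (f i) a.
Proof. by rewrite sdotC sdot_sumr; apply: eq_bigr => i _; rewrite sdotC. Qed.

Lemma sdot_ge0 a : 0 <= sdot a a.
Proof. by apply: sumr_ge0 => j _; rewrite -expr2 sqr_ge0. Qed.

Lemma snorm_sqr a : snorm a ^+ 2 = sdot a a.
Proof. by rewrite sqr_sqrtr // sdot_ge0. Qed.

Lemma sdot_sqrDZ a b t :
  sdot (a + t *: b) (a + t *: b) = sdot a a + 2 * t * sdot a b + t ^+ 2 * sdot b b.
Proof. by rewrite !sdotDl !sdotDr !sdotZl !sdotZr (sdotC b a); ring. Qed.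

Lemma sdot_le_sqr a b : 2 * sdot a b <= sdot a a + sdot b b.
Proof. by have := sdot_ge0 (a - b); rewrite !sdotBl !sdotBr (sdotC b a); lra. Qed.

Lemma sdot_sum_sqr_le n (v : 'I_n -> vec) :
  sdot (\sum_(i < n) v i) (\sum_(i < n) v i) <= n%:R * \sum_(i < n) sdot (v i) (v i).
Proof.
set a := fun i => sdot (v i) (v i).
have -> : n%:R * \sum_(i < n) a i = 2^-1 * \sum_(i < n) \sum_(j < n) (a i + a j).
  rewrite [in RHS](eq_bigr (fun i => a i *+ n + \sum_(j < n) a j)); last first.
    by move=> i _; rewrite big_split /= sumr_const card_ord.
  rewrite big_split /= sumr_const card_ord sumrMnl mulr_natl; lra.
rewrite sdot_suml mulr_sumr; apply: ler_sum => i _.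
rewrite sdot_sumr mulr_sumr; apply: ler_sum => j _.
by have := sdot_le_sqr (v i) (v j); rewrite /a; lra.
Qed.

(* Both sides are sums over coordinates, so this is the scalar case summed. *)
Lemma extragradient_sdot_le (x xt x1 u Fx Fxt gx gxt : vec) g :
  g * sdot Fxt (xt - u) + sdot (xt - (x - g *: gx)) (x1 - xt)
    + sdot (x1 - (x - g *: gxt)) (u - x1)
  <= 2^-1 * (sdot (x - u) (x - u) - sdot (x1 - u) (x1 - u))
     + g ^+ 2 * (3 * sdot (Fx - gx) (Fx - gx) + 4 * sdot (Fxt - gxt) (Fxt - gxt))
     + g * sdot (Fxt - gxt) (x - u)
     + (3 / 2 * g ^+ 2 * sdot (Fxt - Fx) (Fxt - Fx) - 8^-1 * sdot (xt - x) (xt - x)).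
Proof.
rewrite /sdot.
repeat first [rewrite mulr_sumr | rewrite -sumrB | rewrite -big_split /=].
apply: ler_sum => j _; rewrite !mxE.
exact: extragradient_scalar_le.
Qed.

Lemma avgop_lipschitz_sqr n (Fi : 'I_n -> vec -> vec) (L : R) y z :
  (0 < n)%N -> 0 <= L -> (forall i, snorm (Fi i y - Fi i z) <= L * snorm (y - z)) ->
  sdot (avgop Fi y - avgop Fi z) (avgop Fi y - avgop Fi z)
    <= L ^+ 2 * sdot (y - z) (y - z).
Proof.
move=> n_gt0 L_ge0 lip.
have each i : sdot (Fi i y - Fi i z) (Fi i y - Fi i z) <= L ^+ 2 * sdot (y - z) (y - z).
  by rewrite -!snorm_sqr -exprMn ler_sqr ?nnegrE ?lip ?mulr_ge0 ?sqrtr_ge0.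
have sum_le : \sum_(i < n) sdot (Fi i y - Fi i z) (Fi i y - Fi i z)
              <= n%:R * (L ^+ 2 * sdot (y - z) (y - z)).
  by apply: le_trans (ler_sum _ (fun i _ => each i)) _; rewrite sumr_const card_ord mulr_natl.
have -> : avgop Fi y - avgop Fi z = n%:R^-1 *: \sum_(i < n) (Fi i y - Fi i z).
  by rewrite /avgop -scalerBr sumrB.
have n_pos : (0 : R) < n%:R by rewrite ltr0n.
rewrite sdotZl sdotZr mulrA -invfM ler_pdivrMl ?mulr_gt0 // -mulrA.
exact: le_trans (sdot_sum_sqr_le _) (ler_wpM2l (ltW n_pos) sum_le).
Qed.

End InnerProduct.

Section Prox.
Variables (R : realType) (d : nat).
Notation vec := 'rV[R]_d.
Variables (gamma : R) (Psi : vec -> \bar R).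
Hypotheses (Psi_proper : proper_fun Psi) (Psi_convex : convex_fun Psi).
Hypothesis gamma_gt0 : 0 < gamma.

Lemma prox_fin_num z p y :
  is_prox gamma Psi z p -> Psi y \is a fin_num -> Psi p \is a fin_num.
Proof.
move=> /(_ y); have [Psi_ninfty _] := Psi_proper.
move: (Psi_ninfty p); case: (Psi p) => [q| |] //= _.
by case: (Psi y) => //= r; rewrite gt0_muley ?lte_fin.
Qed.

(* Compare p with t y + (1 - t) p and let t -> 0. *)
Lemma prox_variational_ineq z p y (Pp Py : R) :
  is_prox gamma Psi z p -> Psi p = Pp%:E -> Psi y = Py%:E ->
  gamma * Pp <= gamma * Py + sdot (p - z) (y - p).
Proof.
move=> prox_p ep ey.
apply: (le_of_le_add_vanishing (c := 2^-1 * sdot (y - p) (y - p))).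
move=> t /andP[t0 t1].
set yt := t *: y + (1 - t) *: p.
have cvx := Psi_convex y p (t := t); rewrite t0 t1 ey ep -!EFinM -EFinD in cvx.
have [/fineK eyt|] := boolP (Psi yt \is a fin_num); last first.
  have [Psi_ninfty _] := Psi_proper.
  by move: (cvx isT) (Psi_ninfty yt); case: (Psi yt).
move: (cvx isT) (prox_p yt); rewrite -eyt ep lee_fin -!EFinM -!EFinD lee_fin !snorm_sqr.
have -> : yt - z = (p - z) + t *: (y - p).
  by apply/rowP => j; rewrite !mxE; ring.
rewrite sdot_sqrDZ => cvx' opt.
have gcvx : gamma * fine (Psi yt) <= gamma * (t * Py + (1 - t) * Pp).
  by rewrite ler_pM2l.
have : t * (gamma * Pp) <= t * (gamma * Py + sdot (p - z) (y - p)
                                + t * (2^-1 * sdot (y - p) (y - p))) by lra.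
by rewrite ler_pM2l.
Qed.

Lemma convex_fun_avg (f : nat -> vec) (P : nat -> R) m :
  (forall k, (k <= m)%N -> Psi (f k) = (P k)%:E) ->
  (Psi (m.+1%:R^-1 *: \sum_(k < m.+1) f k) <= (m.+1%:R^-1 * \sum_(k < m.+1) P k)%:E)%E.
Proof.
elim: m => [|m IH] Pf.
  by rewrite !big_ord1 invr1 scale1r mul1r Pf.
have {}IH := IH (fun k km => Pf k (leqW km)).
pose t : R := m.+1%:R / m.+2%:R.
have m2_gt0 : (0 : R) < m.+2%:R by rewrite ltr0n.
have t0 : 0 < t by rewrite divr_gt0 ?ltr0n.
have t1 : t < 1 by rewrite ltr_pdivrMr // mul1r ltr_nat.
have tm : t * m.+1%:R^-1 = m.+2%:R^-1 by rewrite /t mulrAC divff ?mul1r // pnatr_eq0.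
have t_compl : 1 - t = m.+2%:R^-1.
  by rewrite /t -[X in X - _](divff (lt0r_neq0 m2_gt0)) -mulrBl -natrB // subSnn mul1r.
have -> : m.+2%:R^-1 *: \sum_(k < m.+2) f k
    = t *: (m.+1%:R^-1 *: \sum_(k < m.+1) f k) + (1 - t) *: f m.+1.
  by rewrite big_ord_recr /= scalerA tm t_compl scalerDr.
have := Psi_convex (m.+1%:R^-1 *: \sum_(k < m.+1) f k) (f m.+1) (t := t).
rewrite t0 t1 => /(_ isT) /le_trans; apply.
rewrite Pf //.
apply: le_trans (leeD (lee_wpmul2l _ IH) (lexx _)) _; first by rewrite lee_fin ltW.
by rewrite -!EFinM -EFinD lee_fin [X in _ <= _ * X]big_ord_recr /= mulrA tm t_compl mulrDr.
Qed.

Lemma seg_step_bound L (x xt x1 u Fx Fxt Fu gx gxt : vec) (Pxt Px1 Pu : R) :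
  gamma ^+ 2 * L ^+ 2 <= 12^-1 ->
  is_prox gamma Psi (x - gamma *: gx) xt -> is_prox gamma Psi (x - gamma *: gxt) x1 ->
  Psi xt = Pxt%:E -> Psi x1 = Px1%:E -> Psi u = Pu%:E ->
  0 <= sdot (Fxt - Fu) (xt - u) ->
  sdot (Fxt - Fx) (Fxt - Fx) <= L ^+ 2 * sdot (xt - x) (xt - x) ->
  sdot Fu (xt - u) + Pxt - Pu <=
  (snorm (x - u) ^+ 2 - snorm (x1 - u) ^+ 2) / (2 * gamma)
  + gamma * (3 * snorm (Fx - gx) ^+ 2 + 4 * snorm (Fxt - gxt) ^+ 2)
  + sdot (Fxt - gxt) (x - u).
Proof.
move=> gL prox_xt prox_x1 ext ex1 eu mono lip.
have opt_xt := prox_variational_ineq prox_xt ext ex1.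
have opt_x1 := prox_variational_ineq prox_x1 ex1 eu.
have key := extragradient_sdot_le x xt x1 u Fx Fxt gx gxt gamma.
have err : 3 / 2 * gamma ^+ 2 * sdot (Fxt - Fx) (Fxt - Fx)
           <= 8^-1 * sdot (xt - x) (xt - x).
  have : 0 <= gamma ^+ 2 * (L ^+ 2 * sdot (xt - x) (xt - x) - sdot (Fxt - Fx) (Fxt - Fx)).
    by rewrite mulr_ge0 ?sqr_ge0 // subr_ge0.
  have : 0 <= (12^-1 - gamma ^+ 2 * L ^+ 2) * sdot (xt - x) (xt - x).
    by rewrite mulr_ge0 ?sdot_ge0 // subr_ge0.
  lra.
have mono_u : gamma * sdot Fu (xt - u) <= gamma * sdot Fxt (xt - u).
  by rewrite ler_pM2l // -subr_ge0 -sdotBl.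
have half a b : gamma * ((a - b) / (2 * gamma)) = 2^-1 * (a - b).
  by field; rewrite gt_eqF.
rewrite -(ler_pM2l gamma_gt0) !snorm_sqr !mulrDr half.
lra.
Qed.

End Prox.

Theorem lemmaH1 (R : realType) (d n : nat)
  (dsp : measure_display) (Xi : measurableType dsp)
  (D : 'I_n -> probability Xi R)
  (Fxi : 'I_n -> Xi -> 'rV[R]_d -> 'rV[R]_d)
  (Fi : 'I_n -> 'rV[R]_d -> 'rV[R]_d)
  (Psi : 'rV[R]_d -> \bar R)
  (xstar : 'rV[R]_d) (K : nat) (beta gamma L V nu : R) (lam : nat -> R)
  (xi1 xi2 : nat -> 'I_n -> Xi)
  (x xt : nat -> 'rV[R]_d) (ht hh : nat -> 'I_n -> 'rV[R]_d) :
  (0 < n)%N ->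
  proper_fun Psi -> closed_fun Psi -> convex_fun Psi ->
  (* F_i(x) = E_{xi ~ D_i}[F_xi(x)], coordinatewise *)
  (forall i x j, (D i).-integrable setT (fun s => ((Fxi i s x) 0 j)%:E) /\
     ((Fi i x) 0 j)%:E = (\int[D i]_(s in setT) ((Fxi i s x) 0 j)%:E)%E) ->
  (* xstar solves the variational inequality *)
  Psi xstar \is a fin_num ->
  (forall y, (0 <= (sdot (avgop Fi xstar) (y - xstar))%:E + Psi y - Psi xstar)%E) ->
  0 < beta <= 1 ->
  0 < L ->
  0 < gamma <= (Num.sqrt 12 * L)^-1 ->
  snorm (x 0%N - xstar) ^+ 2
    + 640 ^+ 2 * gamma ^+ 2 * ln (48 * n%:R * K.+1%:R / beta) ^+ 2 / n%:R ^+ 2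
      * \sum_(i < n) snorm (Fi i xstar) ^+ 2 <= V ->
  (* Lipschitzness of each F_i and monotonicity of F on Q = closed ball of radius 4 n sqrt V around xstar *)
  (forall i y z, sball xstar (4 * n%:R * Num.sqrt V) y ->
     sball xstar (4 * n%:R * Num.sqrt V) z ->
     snorm (Fi i y - Fi i z) <= L * snorm (y - z)) ->
  (forall y z, sball xstar (4 * n%:R * Num.sqrt V) y ->
     sball xstar (4 * n%:R * Num.sqrt V) z ->
     0 <= sdot (avgop Fi y - avgop Fi z) (y - z)) ->
  (forall k, 0 < lam k) ->
  is_DProx_clipped_SEG_shift Fxi Psi gamma nu lam xi1 xi2 x xt ht hh ->
  (forall k, (k <= K)%N ->
     sball xstar (4 * n%:R * Num.sqrt V) (x k) /\
     sball xstar (4 * n%:R * Num.sqrt V) (xt k)) ->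
  forall u, sball xstar (4 * n%:R * Num.sqrt V) u ->
  let xavg := K.+1%:R^-1 *: \sum_(k < K.+1) xt k in
  let theta := fun k : nat =>
    avgop Fi (xt k) - shiftG (fun i => Fxi i (xi2 k i) (xt k)) (hh k) (lam k) in
  let omega := fun k : nat =>
    avgop Fi (x k) - shiftG (fun i => Fxi i (xi1 k i) (x k)) (ht k) (lam k) in
  ((sdot (avgop Fi u) (xavg - u))%:E + Psi xavg - Psi u
   <= ((snorm (x 0%N - u) ^+ 2 - snorm (x K.+1 - u) ^+ 2) / (2 * gamma * K.+1%:R)
       + gamma / K.+1%:R * \sum_(k < K.+1) (3 * snorm (omega k) ^+ 2 + 4 * snorm (theta k) ^+ 2)
       + K.+1%:R^-1 * \sum_(k < K.+1) sdot (theta k) (x k - u))%:E)%E.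
Proof.
move=> n_gt0 Psi_proper _ Psi_convex _ _ _ _ L_gt0 /andP[gamma_gt0 gamma_le] _ lip mono _
  seg inQ u uQ /=.
pose theta k := avgop Fi (xt k) - shiftG (fun i => Fxi i (xi2 k i) (xt k)) (hh k) (lam k).
pose omega k := avgop Fi (x k) - shiftG (fun i => Fxi i (xi1 k i) (x k)) (ht k) (lam k).
have gL := sqrMr_le_inv_sqrt gamma_gt0 L_gt0 (ltr0n _ 12) gamma_le.
case eu : (Psi u) => [r| |]; last 2 first.
- by rewrite /= addeNy leNye.
- by have [/(_ u)] := Psi_proper; rewrite eu.
have fin k : Psi (xt k) \is a fin_num /\ Psi (x k.+1) \is a fin_num.
  have [prox_xt _ prox_x1 _] := seg k.
  have fin_x1 : Psi (x k.+1) \is a fin_num.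
    by apply: (prox_fin_num (y := u) Psi_proper gamma_gt0 prox_x1); rewrite eu.
  by split=> //; apply: (prox_fin_num Psi_proper gamma_gt0 prox_xt fin_x1).
have jensen := convex_fun_avg Psi_convex (f := xt) (P := fun k => fine (Psi (xt k))) (m := K)
  (fun k _ => esym (fineK (fin k).1)).
apply: le_trans (leeB (leeD (lexx _) jensen) (lexx r%:E)) _.
rewrite -!EFinD lee_fin.
have -> : K.+1%:R^-1 *: \sum_(k < K.+1) xt k - u = K.+1%:R^-1 *: \sum_(k < K.+1) (xt k - u).
  by rewrite sumrB sumr_const card_ord scalerBr -[u *+ _]scaler_nat scalerA mulVf ?scale1r.
rewrite sdotZr sdot_sumr.
apply: (avg_telescope_le (a := fun k => snorm (x k - u) ^+ 2)
  (W := fun k => 3 * snorm (omega k) ^+ 2 + 4 * snorm (theta k) ^+ 2)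
  (T := fun k => sdot (theta k) (x k - u)) (S := fun k => sdot (avgop Fi u) (xt k - u))
  (P := fun k => fine (Psi (xt k))) gamma_gt0) => k kK.
have [prox_xt _ prox_x1 _] := seg k; have [xQ xtQ] := inQ k kK.
apply: (seg_step_bound Psi_proper Psi_convex gamma_gt0 gL prox_xt prox_x1
  (esym (fineK (fin k).1)) (esym (fineK (fin k).2)) eu (mono _ _ xtQ uQ)).
exact: avgop_lipschitz_sqr n_gt0 (ltW L_gt0) (fun i => lip i _ _ xtQ xQ).
Qed.
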